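(* Let $(\alpha_n)_{n\ge0}$ be a sequence of positive numbers and $\rho>1$. Let $(Y_n)_{n\ge1}$ be i.i.d. with $\mathbb{P}(Y_1<0)>0$ and $\mathbb{P}(Y_1\ge x)\precsim(\log x)^{-\alpha}$ as $x\to\infty$ for some $\alpha>1$. Let $X_n:=\sum_{k=1}^n\rho^{n-k}\alpha_{n-k}Y_k$. (1) If $(\alpha_n)$ is nondecreasing, there is a constant $c>0$ such that $\mathbb{P}\big(\bigcap_{n=1}^\infty\{X_n\le-c\,\alpha_{n-1}\rho^{n-1}\}\big)>0$. (2) If $0<l\le\alpha_n\le u<\infty$ for all $n\ge0$, there is a constant $c>0$ such that $\mathbb{P}\big(\bigcap_{n=1}^\infty\{X_n\le-c\,\rho^{n-1}\}\big)>0$.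
   Context: $f\precsim g$ as $x\to\infty$ means $\limsup_{x\to\infty}f(x)/g(x)<\infty$. *)

From HB Require Import structures.
From mathcomp Require Import all_boot all_order all_algebra.
From mathcomp Require Import all_classical all_reals all_analysis.
Set Implicit Arguments. Unset Strict Implicit. Unset Printing Implicit Defensive.
Import Order.TTheory GRing.Theory Num.Theory.
Local Open Scope classical_set_scope.
Local Open Scope ring_scope.

Definition mutually_independent {d} {T : measurableType d} {R : realType}
  (P : probability T R) (Y : nat -> {RV P >-> R}) : Prop :=
  forall (I : seq nat) (B : nat -> set R),
    uniq I -> (forall i, i \in I -> measurable (B i)) ->
    P (\bigcap_(i in [set i | i \in I]) (Y i @^-1` B i))
    = (\prod_(i <- I) P (Y i @^-1` B i))%E.

Definition identically_distributed {d} {T : measurableType d} {R : realType}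
  (P : probability T R) (Y : nat -> {RV P >-> R}) : Prop :=
  forall n (B : set R), measurable B -> P (Y n @^-1` B) = P (Y 0%N @^-1` B).

Definition iid {d} {T : measurableType d} {R : realType}
  (P : probability T R) (Y : nat -> {RV P >-> R}) : Prop :=
  mutually_independent Y /\ identically_distributed Y.

Definition Xseq {d} {T : measurableType d} {R : realType} (P : probability T R)
  (alpha : nat -> R) (rho : R) (Y : nat -> {RV P >-> R}) (n : nat) (t : T) : R :=
  \sum_(1 <= k < n.+1) rho ^+ (n - k) * alpha (n - k)%N * Y k t.

From HB Require Import structures.
From mathcomp Require Import all_boot all_order all_algebra.
From mathcomp Require Import all_classical all_reals all_analysis.
From mathcomp Require Import measurable_realfun ring lra.
Import Order.TTheory GRing.Theory Num.Theory.
Local Open Scope classical_set_scope.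
Local Open Scope ring_scope.

(* Pick [del > 0] with [q := P (Y_1 <= -del) > 0] and [1 < s < rho], and let [E_K] be the
   event [Y_1 <= -del], [Y_(i+1) <= 0] for [0 < i < K], [Y_(i+1) <= s^i] for [i >= K].
   On [E_K], [X_(n+1) <= -del alpha_n rho^n + (max_(i<=n) alpha_i) rho^n \sum_(i>=K) (s/rho)^i],
   and the geometric tail is as small as needed once [K] is large: this gives both bounds.
   By independence [P (E_K)] is an infinite product whose first [K] factors are at least [q]
   and whose remaining defects [P (Y_1 > s^i) <= C (i ln s)^-a] are summable because [a > 1],
   so the product is positive for [K] large. *)

Section real_sequences.
Context {R : realType}.
Implicit Types (c : nat -> R) (b r eps : R).

Lemma expr_near_le r eps : 0 <= r < 1 -> 0 < eps -> \forall n \near \oo, r ^+ n <= eps.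
Proof.
move=> /andP[r0 r1] eps0.
have r1' : `|r| < 1 by rewrite ger0_norm.
near=> n.
have /ltW : `|r ^+ n| < eps by near: n; exact: cvgr0_norm_lt _ (cvg_expr r1') _ eps0.
by rewrite ger0_norm // exprn_ge0.
Unshelve. all: end_near.
Qed.

Lemma prod_ge_1_sub_sum c (m n : nat) : (forall i, 0 <= c i <= 1) ->
  1 - \sum_(m <= i < n) (1 - c i) <= \prod_(m <= i < n) c i.
Proof.
move=> c01; elim: n => [|n IH]; first by rewrite !big_geq.
have [mn|nm] := leqP m n; last by rewrite !big_geq.
rewrite !big_nat_recr //=.
have /andP[c0 c1] := c01 n.
have P0 : 0 <= \prod_(m <= i < n) c i by apply: prodr_ge0 => i _; case/andP: (c01 i).
have P1 : \prod_(m <= i < n) c i <= 1 by apply: prodr_ile1.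
nra.
Qed.

Lemma prod_ge_prefix_mul c (m n : nat) : (m <= n)%N -> (forall i, 0 <= c i <= 1) ->
  \prod_(i < m) c i * (1 - \sum_(m <= i < n) (1 - c i)) <= \prod_(i < n) c i.
Proof.
move=> mn c01; rewrite -!(big_mkord xpredT) (big_cat_nat (leq0n m) mn) /=.
apply: ler_wpM2l; last exact: prod_ge_1_sub_sum.
by apply: prodr_ge0 => i _; case/andP: (c01 i).
Qed.

(* Discrete integral comparison, from [ln (k+1) - ln k >= 1/(k+1)] and [expR y >= 1 + y]. *)
Lemma powRN_le_telescope b (k : nat) : 0 < b -> (0 < k)%N ->
  k.+1%:R `^ (-(b + 1)) <= (k%:R `^ (-b) - k.+1%:R `^ (-b)) / b.
Proof.
move=> b0 k0.
have kpos : (0 : R) < k%:R by rewrite ltr0n.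
have k1pos : (0 : R) < k.+1%:R by rewrite ltr0n.
rewrite /powR !gt_eqF //.
set u := ln (k%:R : R); set v := ln (k.+1%:R : R).
have ln_gap : k.+1%:R^-1 <= v - u.
  rewrite -lerN2 opprB /u /v -ln_div ?posrE //.
  have -> : (k%:R : R) / k.+1%:R = 1 + - k.+1%:R^-1.
    by rewrite -natr1; field; rewrite natr1 gt_eqF.
  apply: le_ln1Dx; rewrite ltrN2 invf_lt1 // ltr1n ltnS //.
have expR_gap : expR (- b * v) * (1 + b * (v - u)) <= expR (- b * u).
  have -> : - b * u = - b * v + b * (v - u) by ring.
  by rewrite expRD ler_wpM2l ?expR_ge0 ?expR_ge1Dx.
have -> : expR (- (b + 1) * v) = expR (- b * v) * k.+1%:R^-1.
  by rewrite (_ : - (b + 1) * v = - b * v + - v) ?expRD ?expRN ?lnK //; ring.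
rewrite ler_pdivlMr //.
have E0 : 0 < expR (- b * v) := expR_gt0 _.
set E := expR (- b * v) in E0 expR_gap *; set w := k.+1%:R^-1 in ln_gap *.
have gap : E * w * b <= E * (b * (v - u)).
  rewrite -subr_ge0 (_ : _ - _ = E * b * ((v - u) - w)); last by ring.
  by rewrite !mulr_ge0 ?subr_ge0 // ltW.
rewrite mulrDr mulr1 in expR_gap; lra.
Qed.

Lemma sum_powRN_le b (K n : nat) : 0 < b -> (0 < K)%N ->
  \sum_(K.+1 <= k < n) k%:R `^ (-(b + 1)) <= K%:R `^ (-b) / b.
Proof.
move=> b0 K0.
have [nK|Kn] := leqP n K.+1; first by rewrite big_geq // divr_ge0 ?powR_ge0 ?ltW.
rewrite big_add1 /=.
set f := fun k : nat => - (k%:R `^ (-b) / b).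
apply: (@le_trans _ _ (\sum_(K <= k < n.-1) (f k.+1 - f k))).
  apply: ler_sum_nat => k /andP[Kk _].
  have -> : f k.+1 - f k = (k%:R `^ (-b) - k.+1%:R `^ (-b)) / b by rewrite /f; ring.
  exact: powRN_le_telescope (leq_trans K0 Kk).
rewrite telescope_sumr; last by rewrite -ltnS prednK // (ltn_trans _ Kn).
by rewrite /f opprK addrC gerDl oppr_le0 divr_ge0 ?powR_ge0 // ltW.
Qed.

Lemma near_powRN_predn_le b eps : 0 < b -> 0 < eps ->
  \forall k \near \oo, k.-1%:R `^ (-b) <= eps.
Proof.
move=> b0 eps0; near=> k.
have k_ge : expR (- ln eps / b) + 1 <= k%:R by near: k; exact: nbhs_infty_ger.
have k0 : (0 < k)%N by rewrite -(ltr0n R) (lt_le_trans _ k_ge) // ltr_wpDl ?expR_ge0.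
have k1_ge : expR (- ln eps / b) <= k.-1%:R by rewrite -(prednK k0) -natr1 in k_ge; lra.
have k1pos : (0 : R) < k.-1%:R := lt_le_trans (expR_gt0 _) k1_ge.
rewrite /powR gt_eqF // -[eps in _ <= eps]lnK ?posrE // ler_expR.
have : - ln eps / b <= ln k.-1%:R by rewrite -[X in X <= _]expRK ler_ln ?posrE ?expR_gt0.
rewrite ler_pdivrMr // => h; lra.
Unshelve. all: end_near.
Qed.

Lemma near_sum_powRN_le (a C L eps : R) : 1 < a -> 0 <= C -> 0 < L -> 0 < eps ->
  \forall K \near \oo, forall n, \sum_(K <= i < n) C * (L *+ i) `^ (-a) <= eps.
Proof.
move=> a1 C0 L0 eps0.
have b0 : 0 < a - 1 by rewrite subr_gt0.
have CA0 : 0 <= C * L `^ (-a) by rewrite mulr_ge0 ?powR_ge0.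
set e := eps * (a - 1) / (C * L `^ (-a) + 1).
have e0 : 0 < e by rewrite !divr_gt0 ?mulr_gt0 //; lra.
near=> K => n.
have K1 : (1 < K)%N by near: K; exists 2%N.
have small : K.-1%:R `^ (-(a - 1)) <= e by near: K; exact: near_powRN_predn_le.
have -> : \sum_(K <= i < n) C * (L *+ i) `^ (-a) =
          C * L `^ (-a) * \sum_(K.-1.+1 <= i < n) i%:R `^ (-((a - 1) + 1)).
  rewrite prednK ?(ltnW K1) // big_distrr /=; apply: eq_big_nat => i _.
  by rewrite subrK -[L *+ i]mulr_natr (powRM _ (ltW L0) (ler0n _ _)) mulrA.
apply: (@le_trans _ _ (C * L `^ (-a) * (e / (a - 1)))).
  apply: ler_wpM2l => //; apply: le_trans (sum_powRN_le _ _ _ b0 _) _.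
    by rewrite -ltnS prednK // ltnW.
  by rewrite ler_pM2r ?invr_gt0.
have -> : C * L `^ (-a) * (e / (a - 1)) = eps * (C * L `^ (-a) / (C * L `^ (-a) + 1)).
  by rewrite /e; field; rewrite !gt_eqF //; lra.
rewrite ler_piMr ?(ltW eps0) // ler_pdivrMr ?mul1r; lra.
Unshelve. all: end_near.
Qed.

Definition cutoff (K : nat) (x : R) (i : nat) : R := if (K <= i)%N then x ^+ i else 0.

Definition threshold (del s : R) (K i : nat) : R := if i == 0%N then - del else cutoff K s i.

Lemma cutoff_ge0 (K i : nat) r : 0 <= r -> 0 <= cutoff K r i.
Proof. by move=> r0; rewrite /cutoff; case: ifP => // _; rewrite exprn_ge0. Qed.

Lemma sum_cutoff_le (K n : nat) r : 0 < r < 1 ->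
  \sum_(0 <= i < n) cutoff K r i <= r ^+ K / (1 - r).
Proof.
move=> /andP[r0 r1].
have cK_ge0 i : 0 <= cutoff K r i by exact/cutoff_ge0/ltW.
apply: (@le_trans _ _ (\sum_(0 <= i < K + n) cutoff K r i)).
  by rewrite (big_cat_nat (leq0n n) (leq_addl K n)) /= lerDl sumr_ge0.
rewrite (big_cat_nat (leq0n K) (leq_addr n K)) /= big1_seq ?add0r; last first.
  by move=> i; rewrite mem_index_iota /cutoff => /andP[_ /andP[_]]; rewrite ltnNge => /negbTE->.
rewrite (eq_big_nat _ _ (F2 := fun i => r ^+ i)); last first.
  by move=> i /andP[Ki _]; rewrite /cutoff Ki.
by rewrite geometric_partial_tail geometric_le_lim ?exprn_ge0 ?ltW // ger0_norm ?ltW.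
Qed.

Lemma weighted_le_cutoff (rho s W A y : R) (K i n : nat) :
  0 < rho -> 0 <= s -> (i <= n)%N -> 0 <= A <= W -> y <= cutoff K s i ->
  rho ^+ (n - i) * A * y <= W * rho ^+ n * cutoff K (s / rho) i.
Proof.
move=> rho0 s0 iln /andP[A0 AW] y_le.
have wA0 : 0 <= rho ^+ (n - i) * A by rewrite mulr_ge0 // exprn_ge0 // ltW.
apply: le_trans (ler_wpM2l wA0 y_le) _.
rewrite /cutoff; case: ifP => _; last by rewrite !mulr0.
have -> : W * rho ^+ n * (s / rho) ^+ i = rho ^+ (n - i) * W * s ^+ i.
  rewrite -{1}(subnK iln) exprD expr_div_n; field.
  by rewrite expf_neq0 // gt_eqF.
by rewrite ler_wpM2r ?exprn_ge0 // ler_wpM2l // exprn_ge0 // ltW.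
Qed.

End real_sequences.

Section probability.
Context {d : measure_display} {T : measurableType d} {R : realType} {P : probability T R}.
Implicit Types (Z : {RV P >-> R}) (A : set T).

Lemma fineK_probability A : measurable A -> (fine (P A))%:E = P A.
Proof. by move=> mA; rewrite fineK // fin_num_measure. Qed.

Lemma fine_probability01 A : measurable A -> 0 <= fine (P A) <= 1.
Proof.
move=> mA; rewrite fine_ge0 ?measure_ge0 //=.
by rewrite -lee_fin fineK_probability // probability_le1.
Qed.

Lemma measurable_preimage_le Z (x : R) : measurable (Z @^-1` `]-oo, x]).
Proof. by apply: measurable_funPTI; exact: measurable_itv. Qed.

Lemma measurable_preimage_ge Z (x : R) : measurable [set t | x <= Z t].
Proof.
rewrite (_ : [set t | _] = Z @^-1` `[x, +oo[); last first.
  by apply/seteqP; split => t /=; rewrite in_itv /= andbT.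
by apply: measurable_funPTI; exact: measurable_itv.
Qed.

Lemma le_fine_probability_preimage Z (x y : R) : x <= y ->
  fine (P (Z @^-1` `]-oo, x])) <= fine (P (Z @^-1` `]-oo, y])).
Proof.
move=> xy; have mx := measurable_preimage_le Z x; have my := measurable_preimage_le Z y.
rewrite -lee_fin !fineK_probability //; apply: le_measure; rewrite ?inE //.
by move=> t /=; rewrite !in_itv /= => /le_trans; apply.
Qed.

Lemma one_sub_probability_le_ge Z (x : R) :
  1 - fine (P (Z @^-1` `]-oo, x])) <= fine (P [set t | x <= Z t]).
Proof.
have mgt : measurable (~` (Z @^-1` `]-oo, x])).
  exact/measurableC/measurable_preimage_le.
have mge := measurable_preimage_ge Z x.
have -> : 1 - fine (P (Z @^-1` `]-oo, x])) = fine (P (~` (Z @^-1` `]-oo, x]))).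
  rewrite probability_setC; last exact: measurable_preimage_le.
  by rewrite -[in RHS](fineK_probability _ (measurable_preimage_le Z x)).
apply: fine_le; rewrite ?fin_num_measure //.
apply: le_measure; rewrite ?inE //.
by move=> t /=; rewrite in_itv /= => /negP; rewrite -ltNge => /ltW.
Qed.

Lemma exists_probability_le_neg Z : (0 < P [set t | (Z t < 0)%R])%E ->
  exists2 del : R, 0 < del & 0 < fine (P (Z @^-1` `]-oo, - del])).
Proof.
move=> Zneg; set A := fun m : nat => Z @^-1` `]-oo, - m.+1%:R^-1].
have [[m Am]|] := pselect (exists m, (0 < P (A m))%E).
  exists m.+1%:R^-1; first by rewrite invr_gt0 ltr0n.
  by rewrite -lte_fin (fineK_probability _ (measurable_preimage_le _ _)).
move=> noA; exfalso.
have /negligible_bigcup[N [mN PN0 AN]] : forall m, P.-negligible (A m).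
  move=> m; exists (A m); split => //; first exact: measurable_preimage_le.
  by apply/eqP; rewrite eq_le measure_ge0 andbT leNgt; apply/negP => Am; apply: noA; exists m.
have : (P [set t | (Z t < 0)%R] <= P N)%E.
  have mneg : measurable [set t | (Z t < 0)%R].
    rewrite (_ : [set t | _] = Z @^-1` `]-oo, 0[); last first.
      by apply/seteqP; split => t /=; rewrite in_itv.
    by apply: measurable_funPTI; exact: measurable_itv.
  apply: le_measure; rewrite ?inE //.
  move=> t /= Zt; apply: AN.
  have Zt' : 0 < - Z t by rewrite oppr_gt0.
  have [m _ Hm] := near_infty_natSinv_lt (PosNum Zt').
  exists m => //; rewrite /A /= in_itv /= lerNr; exact/ltW/(Hm m (leqnn m)).
by rewrite PN0 leNgt Zneg.
Qed.

Lemma measure_bigcap_ge (A : nat -> set T) (x : \bar R) :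
  (forall i, measurable (A i)) ->
  (\forall n \near \oo, x <= P (\bigcap_(i in [set i | i \in iota 0 n]) A i))%E ->
  (x <= P (\bigcap_i A i))%E.
Proof.
move=> mA x_le.
set F := fun n => \bigcap_(i in [set i | i \in iota 0 n]) A i.
have mF n : measurable (F n) by apply: bigcap_measurableType => i _; exact: mA.
have -> : \bigcap_i A i = \bigcap_n F n.
  apply/seteqP; split => t At; first by move=> n _ i _; exact: At.
  move=> i _; have iS : i \in iota 0 i.+1 by rewrite mem_iota add0n ltnSn.
  exact: At i.+1 I i iS.
have cvgF : (P \o F) n @[n --> \oo] --> P (\bigcap_n F n).
  apply: nonincreasing_cvg_mu => //.
  - by rewrite (le_lt_trans (probability_le1 P (mF 0%N))) ?ltry.
  - exact: bigcapT_measurable.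
  - move=> m n mn; apply/subsetPset => t Ft i /=; rewrite mem_iota add0n => im.
    by apply: Ft; rewrite /= mem_iota add0n (leq_trans im mn).
rewrite -(cvg_lim (@ereal_hausdorff R) cvgF).
by apply: lime_ge => //; apply/cvg_ex; exists (P (\bigcap_n F n)).
Qed.

Lemma iid_probability_bigcap_iota (Z : nat -> {RV P >-> R}) (B : nat -> set R) (n : nat) :
  iid Z -> (forall i, measurable (B i)) ->
  P (\bigcap_(i in [set i | i \in iota 0 n]) (Z i @^-1` B i)) =
  (\prod_(i < n) P (Z 0%N @^-1` B i))%E.
Proof.
move=> [Zind Zid] mB; rewrite Zind; [|exact: iota_uniq|by move=> i _; exact: mB].
rewrite (_ : iota 0 n = index_iota 0 n) ?big_mkord; last by rewrite /index_iota subn0.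
by apply: eq_bigr => i _; rewrite Zid.
Qed.

(* The product of the [P (Z_0 <= beta i)] is at least [q ^+ m / 2]. *)
Lemma iid_probability_bigcap_gt0 (Z : nat -> {RV P >-> R}) (beta : nat -> R) (q : R) (m : nat) :
  iid Z -> 0 < q ->
  (forall i, q <= fine (P (Z 0%N @^-1` `]-oo, beta i]))) ->
  (forall n, (m <= n)%N -> \sum_(m <= i < n) (1 - fine (P (Z 0%N @^-1` `]-oo, beta i]))) <= 1/2) ->
  (0 < P (\bigcap_i (Z i @^-1` `]-oo, beta i])))%E.
Proof.
move=> Ziid q0 q_le tail_le.
set c := fun i => fine (P (Z 0%N @^-1` `]-oo, beta i])).
have c01 i : 0 <= c i <= 1 by exact/fine_probability01/measurable_preimage_le.
apply: (@lt_le_trans _ _ (q ^+ m * 2^-1)%:E); first by rewrite lte_fin mulr_gt0 ?exprn_gt0.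
apply: measure_bigcap_ge => [i|]; first exact: measurable_preimage_le.
exists m => // n /= mn.
rewrite iid_probability_bigcap_iota //.
rewrite (eq_bigr (fun i : 'I_n => (c i)%:E)); last first.
  by move=> i _; rewrite (fineK_probability _ (measurable_preimage_le _ _)).
rewrite prodEFin lee_fin; apply: le_trans (prod_ge_prefix_mul _ _ _ mn c01).
apply: ler_pM.
- by rewrite exprn_ge0 // ltW.
- by rewrite invr_ge0.
- have <- : \prod_(i < m) q = q ^+ m by rewrite prodr_const card_ord.
  by apply: ler_prod => i _; rewrite (ltW q0) q_le.
- by have := tail_le n mn; lra.
Qed.

Lemma near_tail_sum_le Z (a C s : R) : 1 < a -> 1 < s ->
  (\forall x \near +oo, (P [set t | (x <= Z t)%R] <= (C * (ln x) `^ (- a))%:E)%E) ->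
  \forall K \near \oo, forall n,
    \sum_(K <= i < n) (1 - fine (P (Z @^-1` `]-oo, s ^+ i]))) <= 1 / 2.
Proof.
move=> a1 s1 [M [_ tail_le]].
have s0 : 0 < s by lra.
have lns0 : 0 < ln s by exact: ln_gt0.
near=> K.
have tailK : forall n, \sum_(K <= i < n) `|C| * (ln s *+ i) `^ (- a) <= 1 / 2.
  by near: K; apply: near_sum_powRN_le => //; lra.
have sK : `|M| + 1 <= s ^+ K.
  have : s^-1 ^+ K <= (`|M| + 1)^-1.
    near: K; apply: expr_near_le; first by rewrite invr_ge0 (ltW s0) invf_lt1.
    by rewrite invr_gt0 ltr_wpDl.
  by rewrite exprVn lef_pV2 ?posrE ?exprn_gt0 // ltr_wpDl.
move=> n; apply: le_trans (tailK n); apply: ler_sum_nat => i /andP[Ki _].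
apply: le_trans (one_sub_probability_le_ge Z (s ^+ i)) _.
have Msi : M < s ^+ i.
  apply: (lt_le_trans (_ : M < `|M| + 1)); first by rewrite (le_lt_trans (ler_norm M)) ?ltrDl.
  by apply: le_trans sK (ler_weXn2l _ Ki); exact: ltW.
move: (tail_le _ Msi); rewrite -(fineK_probability _ (measurable_preimage_ge _ _)) lee_fin.
move=> /le_trans; apply; rewrite lnXn //.
by apply: ler_wpM2r; [exact: powR_ge0 | exact: ler_norm].
Unshelve. all: end_near.
Qed.

Lemma near_probability_threshold_gt0 (Z : nat -> {RV P >-> R}) (del s : R) :
  iid Z -> 0 < del -> 0 < fine (P (Z 0%N @^-1` `]-oo, - del])) -> 1 < s ->
  (exists a : R, 1 < a /\ exists C : R,
     \forall x \near +oo, (P [set t | (x <= Z 0%N t)%R] <= (C * (ln x) `^ (- a))%:E)%E) ->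
  \forall K \near \oo, (0 < P (\bigcap_i (Z i @^-1` `]-oo, threshold del s K i])))%E.
Proof.
move=> Ziid del0 q0 s1 [a [a1 [C tail_le]]].
near=> K.
have tailK : forall n,
    \sum_(K <= i < n) (1 - fine (P (Z 0%N @^-1` `]-oo, s ^+ i]))) <= 1 / 2.
  by near: K; exact: (near_tail_sum_le _ _ _ _ a1 s1 tail_le).
have K0 : (0 < K)%N by near: K; exists 1%N.
apply: (@iid_probability_bigcap_gt0 Z _ _ K Ziid q0).
  move=> i; apply: le_fine_probability_preimage; rewrite /threshold.
  case: eqP => // _; apply: (@le_trans _ _ 0); first by rewrite oppr_le0 ltW.
  by apply: cutoff_ge0; lra.
move=> n _; apply: le_trans (tailK n); rewrite le_eqVlt; apply/orP; left; apply/eqP.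
apply: eq_big_nat => i /andP[Ki _].
by rewrite /threshold /cutoff Ki gtn_eqF // (leq_trans K0 Ki).
Unshelve. all: end_near.
Qed.

End probability.

Section Xseq_bounds.
Context {d : measure_display} {T : measurableType d} {R : realType} {P : probability T R}.
Context {rho : R} {Y : nat -> {RV P >-> R}}.

Lemma measurable_Xseq_le (alpha : nat -> R) (n : nat) (c : R) :
  measurable [set t | Xseq alpha rho Y n t <= c].
Proof.
have mX : measurable_fun setT (Xseq alpha rho Y n).
  apply: measurable_sum => k.
  by apply: measurableT_comp; [exact: mulrl_measurable | exact: measurable_funPT].
rewrite (_ : [set t | _] = setT `&` Xseq alpha rho Y n @^-1` `]-oo, c]).
  by apply: mX => //; exact: measurable_itv.
by apply/seteqP; split => t /=; rewrite in_itv //=; case.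
Qed.

Lemma XseqS (alpha : nat -> R) (n : nat) t :
  Xseq alpha rho Y n.+1 t = rho ^+ n * alpha n * Y 1%N t +
    \sum_(1 <= i < n.+1) rho ^+ (n - i) * alpha (n - i)%N * Y i.+1 t.
Proof.
rewrite /Xseq big_ltn // subSS subn0; congr +%R.
by rewrite big_add1 /=; apply: eq_big_nat => i _; rewrite subSS.
Qed.

Lemma Xseq_le_threshold (alpha : nat -> R) (del s W : R) (K n : nat) t :
  0 < s -> s < rho ->
  (forall i, (i <= n)%N -> 0 <= alpha (n - i)%N <= W) ->
  (forall i, Y i.+1 t <= threshold del s K i) ->
  Xseq alpha rho Y n.+1 t <=
    - del * alpha n * rho ^+ n + W * rho ^+ n * ((s / rho) ^+ K / (1 - s / rho)).
Proof.
move=> s0 srho alpha_le Y_le.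
have rho0 : 0 < rho := lt_trans s0 srho.
have /andP[alpha_n0 _] := alpha_le 0%N (leq0n n); rewrite subn0 in alpha_n0.
have W0 : 0 <= W by case/andP: (alpha_le 0%N (leq0n n)) => /le_trans; apply.
have r01 : 0 < s / rho < 1 by rewrite divr_gt0 //= ltr_pdivrMr ?mul1r.
rewrite XseqS; apply: lerD.
  have := Y_le 0%N; rewrite /threshold eqxx => Y1_le.
  rewrite (_ : - del * _ * _ = rho ^+ n * alpha n * - del); last by ring.
  by rewrite ler_wpM2l // mulr_ge0 // exprn_ge0 // ltW.
apply: (@le_trans _ _ (\sum_(1 <= i < n.+1) W * rho ^+ n * cutoff K (s / rho) i)).
  apply: ler_sum_nat => i /andP[i0 i_n].
  apply: weighted_le_cutoff; [exact: rho0 | exact: ltW | exact: i_n | exact: alpha_le |].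
  by have := Y_le i; rewrite /threshold gtn_eqF.
rewrite -big_distrr /=; apply: ler_wpM2l; first by rewrite mulr_ge0 // exprn_ge0 // ltW.
apply: le_trans (sum_cutoff_le K n.+1 _ r01).
by rewrite [leRHS](big_ltn (ltn0Sn n)) lerDr cutoff_ge0 // divr_ge0 // ltW.
Qed.

Lemma probability_bigcap_Xseq_le_gt0 (alpha c : nat -> R) (E : set T) :
  measurable E /\ (0 < P E)%E ->
  (forall t, E t -> forall n, Xseq alpha rho Y n.+1 t <= c n) ->
  (0 < P (\bigcap_n [set t | (Xseq alpha rho Y n.+1 t <= c n)%R]))%E.
Proof.
move=> [mE PE] E_le; apply: (lt_le_trans PE); apply: le_measure; rewrite ?inE //.
  by apply: bigcapT_measurable => n; exact: measurable_Xseq_le.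
by move=> t Et n _; exact: E_le.
Qed.

Lemma exists_event_Xseq_le :
  1 < rho -> iid (fun n => Y n.+1) -> (0 < P [set t | (Y 1%N t < 0)%R])%E ->
  (exists a : R, 1 < a /\ exists C : R,
     \forall x \near +oo, (P [set t | (x <= Y 1%N t)%R] <= (C * (ln x) `^ (- a))%:E)%E) ->
  exists2 del : R, 0 < del & forall eta : R, 0 < eta ->
    exists2 E : set T, measurable E /\ (0 < P E)%E &
    forall t, E t -> forall (alpha : nat -> R) (W : R) (n : nat),
      (forall i, (i <= n)%N -> 0 <= alpha (n - i)%N <= W) ->
      Xseq alpha rho Y n.+1 t <= - del * alpha n * rho ^+ n + W * rho ^+ n * eta.
Proof.
move=> rho1 Yiid Yneg Ytail.
have [del del0 q0] := exists_probability_le_neg _ Yneg.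
exists del => // eta eta0.
set s := (1 + rho) / 2.
have s0 : 0 < s by rewrite /s; lra.
have s1 : 1 < s by rewrite /s; lra.
have srho : s < rho by rewrite /s; lra.
have r01 : 0 <= s / rho < 1.
  by rewrite divr_ge0 /=; [rewrite ltr_pdivrMr ?mul1r //| |]; lra.
have : \forall K \near \oo,
    (0 < P (\bigcap_i (Y i.+1 @^-1` `]-oo, threshold del s K i])))%E /\
    (s / rho) ^+ K <= eta * (1 - s / rho).
  near=> K; split; near: K.
    exact: (near_probability_threshold_gt0 _ _ _ Yiid del0 q0 s1 Ytail).
  by apply: expr_near_le => //; rewrite mulr_gt0 // subr_gt0; case/andP: r01.
case=> K _ /(_ K (leqnn K)) [PE rK].
exists (\bigcap_i (Y i.+1 @^-1` `]-oo, threshold del s K i])).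
  by split => //; apply: bigcapT_measurable => i; exact: measurable_preimage_le.
move=> t Et alpha W n alpha_le.
have W0 : 0 <= W by case/andP: (alpha_le 0%N (leq0n n)) => /le_trans; apply.
apply: le_trans (Xseq_le_threshold alpha del s W K n t s0 srho alpha_le _) _.
  by move=> i; have := Et i I; rewrite /= in_itv.
rewrite lerD2l; apply: ler_wpM2l; first by rewrite mulr_ge0 // exprn_ge0 //; lra.
by rewrite ler_pdivrMr // subr_gt0; case/andP: r01.
Unshelve. all: end_near.
Qed.

End Xseq_bounds.

Theorem mainTheorem20 (d : measure_display) (T : measurableType d)
  (R : realType) (P : probability T R)
  (alpha : nat -> R) (rho : R) (Y : nat -> {RV P >-> R}) :
  (forall n, 0 < alpha n) ->
  1 < rho ->
  iid (fun n => Y n.+1) ->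
  (0 < P [set t | (Y 1%N t < 0)%R])%E ->
  (exists a : R, 1 < a /\ exists C : R,
     \forall x \near +oo, (P [set t | (x <= Y 1%N t)%R] <= (C * (ln x) `^ (- a))%:E)%E) ->
  ({homo alpha : m n / (m <= n)%N >-> m <= n} ->
     exists c : R, 0 < c /\
       (0 < P (\bigcap_n [set t | (Xseq alpha rho Y n.+1 t <= - c * alpha n * rho ^+ n)%R]))%E)
  /\
  ((exists l u : R, 0 < l /\ forall n, l <= alpha n <= u) ->
     exists c : R, 0 < c /\
       (0 < P (\bigcap_n [set t | (Xseq alpha rho Y n.+1 t <= - c * rho ^+ n)%R]))%E).
Proof.
move=> alpha0 rho1 Yiid Yneg Ytail.
have [del del0 event] := exists_event_Xseq_le rho1 Yiid Yneg Ytail.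
split => [alpha_homo | [l [u [l0 alpha_lu]]]].
- have del2 : 0 < del / 2 by lra.
  have [E PE E_le] := event _ del2; exists (del / 2); split => //.
  apply: probability_bigcap_Xseq_le_gt0 PE _ => t Et n.
  apply: le_trans (E_le t Et alpha (alpha n) n _) _.
    by move=> i _; rewrite ltW //= alpha_homo // leq_subr.
  by rewrite mulrAC; lra.
- have u0 : 0 < u by case/andP: (alpha_lu 0%N) => ? ?; lra.
  have eta0 : 0 < del * l / (2 * u) by rewrite divr_gt0 ?mulr_gt0.
  have [E PE E_le] := event _ eta0; exists (del * l / 2); split.
    by rewrite divr_gt0 ?mulr_gt0.
  apply: probability_bigcap_Xseq_le_gt0 PE _ => t Et n.
  apply: le_trans (E_le t Et alpha u n _) _.
    by move=> i _; rewrite ltW //=; case/andP: (alpha_lu (n - i)%N).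
  have -> : u * rho ^+ n * (del * l / (2 * u)) = del * l / 2 * rho ^+ n.
    by field; rewrite gt_eqF.
  have : del * rho ^+ n * l <= del * rho ^+ n * alpha n.
    apply: ler_wpM2l; last by case/andP: (alpha_lu n).
    by rewrite mulr_ge0 ?exprn_ge0 //; lra.
  lra.
Qed.
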